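(* Let $S$ be a profinite semigroup and let $\mathscr F$ be a fundamental system of entourages for $S$ consisting of open fully invariant congruences. For $\rho\in\mathscr F$, let $r_\rho\colon \operatorname{End} S\to \operatorname{End}(S/\rho)$ be the natural map sending $f$ to the induced endomorphism $[s]_\rho\mapsto [f(s)]_\rho$. Then $r_\rho$ is continuous (with $\operatorname{End} S$ carrying the compact-open topology), so its kernel $\widehat\rho=\{(f,g): r_\rho(f)=r_\rho(g)\}$ is an open congruence on $\operatorname{End} S$. Setting $\widehat{\mathscr F}=\{\widehat\rho\mid \rho\in\mathscr F\}$, one has $$\operatorname{End} S\cong \varprojlim_{\widehat\rho\in\widehat{\mathscr F}} \operatorname{End} S/\widehat\rho .$$ Analogously, if $\mathscr F$ is a fundamental system of entourages for $S$ consisting of open characteristic congruences, then the corresponding maps $r_\rho\colon\operatorname{Aut} S\to\operatorname{Aut}(S/\rho)$ are continuous, their kernels $\widehat\rho$ are open congruences on $\operatorname{Aut} S$, and $\operatorname{Aut} S\cong\varprojlim_{\widehat\rho\in\widehat{\mathscr F}}\operatorname{Aut} S/\widehat\rho$.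
   Context: $\operatorname{End} S$ is the monoid of continuous endomorphisms and $\operatorname{Aut} S$ the group of continuous automorphisms of $S$, with the compact-open topology. A congruence $\rho$ on $S$ is open if it is an open subset of $S\times S$; fully invariant if for every continuous endomorphism $f$ of $S$, $(x,y)\in\rho$ implies $(f(x),f(y))\in\rho$; characteristic if the same holds for every continuous automorphism $f$. A fundamental system of entourages for $S$ is a family of such congruences such that every open congruence on $S$ contains one of them. The projective limit is taken over $\widehat{\mathscr F}$ ordered by inclusion, with the natural quotient maps, and the isomorphism is induced by the canonical maps $\operatorname{End} S\to \operatorname{End} S/\widehat\rho$. *)

From HB Require Import structures.
From mathcomp Require Import all_boot all_order all_algebra.
From mathcomp Require Import all_classical all_reals all_analysis.
Set Implicit Arguments. Unset Strict Implicit. Unset Printing Implicit Defensive.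
Local Open Scope classical_set_scope.

Section Defs.
Context {S : topologicalType}.
Variable mul : S -> S -> S.

Definition profinite_semigroup :=
  [/\ associative mul,
      continuous (fun p : S * S => mul p.1 p.2),
      compact [set: S], hausdorff_space S & totally_disconnected [set: S]].

Definition congruence (rho : set (S * S)) :=
  [/\ forall x, rho (x, x),
      forall x y, rho (x, y) -> rho (y, x),
      forall x y z, rho (x, y) -> rho (y, z) -> rho (x, z) &
      forall x y z w, rho (x, y) -> rho (z, w) -> rho (mul x z, mul y w)].

Definition is_hom (f : S -> S) := forall x y, f (mul x y) = mul (f x) (f y).

Definition EndS : set (S -> S) := [set f | continuous f /\ is_hom f].

Definition AutS : set (S -> S) :=
  [set f | [/\ continuous f, is_hom f &
            exists g : S -> S, [/\ continuous g, cancel f g & cancel g f]]].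

Definition fully_invariant (rho : set (S * S)) :=
  forall f, EndS f -> forall x y, rho (x, y) -> rho (f x, f y).

Definition characteristic (rho : set (S * S)) :=
  forall f, AutS f -> forall x y, rho (x, y) -> rho (f x, f y).

Definition fundamental_system (P : set (S * S) -> Prop)
    (F : set (set (S * S))) :=
  (forall rho, F rho -> [/\ open rho, congruence rho & P rho]) /\
  (forall sigma : set (S * S), open sigma -> congruence sigma ->
     exists2 rho, F rho & rho `<=` sigma).

Variable M : set (S -> S).

Definition M_open (U : set (S -> S)) :=
  exists V : set {compact-open, S -> S}, open V /\ U = V `&` M.

Definition M2_open (sigma : set ((S -> S) * (S -> S))) :=
  forall f g, sigma (f, g) ->
    exists U V, [/\ M_open U, M_open V, U f, V g &
                  forall f' g', U f' -> V g' -> sigma (f', g')].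

Definition M_congruence (sigma : set ((S -> S) * (S -> S))) :=
  [/\ forall f g, sigma (f, g) -> M f /\ M g,
      forall f, M f -> sigma (f, f),
      forall f g, sigma (f, g) -> sigma (g, f),
      forall f g h, sigma (f, g) -> sigma (g, h) -> sigma (f, h) &
      forall f g h k, sigma (f, g) -> sigma (h, k) -> sigma (f \o h, g \o k)].

(** r_rho f = r_rho g  iff  the induced maps [s] |-> [f s], [s] |-> [g s] on S/rho
    coincide, i.e. rho (f s, g s) for all s.  rhat rho is the kernel of r_rho. *)
Definition rhat (rho : set (S * S)) : set ((S -> S) * (S -> S)) :=
  [set p | [/\ M p.1, M p.2 & forall s, rho (p.1 s, p.2 s)]].

(** r_rho : M -> End(S/rho) is continuous; S/rho is finite discrete (rho open,
    S compact), so End(S/rho) with the compact-open topology is discrete and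
    continuity means that the fibres of r_rho are open in M. *)
Definition r_continuous (rho : set (S * S)) :=
  forall f, M f -> M_open [set g | rhat rho (f, g)].

(** An element of the limit is a family c assigning to each sigma in Fh a
    sigma-class c sigma (a subset of M), compatible with the bonding maps
    M/sigma -> M/tau for sigma included in tau; c is empty off Fh. *)
Variable Fh : set (set ((S -> S) * (S -> S))).

Definition is_class (sigma : set ((S -> S) * (S -> S))) (C : set (S -> S)) :=
  exists2 f, M f & C = [set g | sigma (f, g)].

Definition family := set ((S -> S) * (S -> S)) -> set (S -> S).

Definition proj_lim (c : family) :=
  [/\ forall sigma, Fh sigma -> is_class sigma (c sigma),
      forall sigma tau, Fh sigma -> Fh tau -> sigma `<=` tau ->
                        c sigma `<=` c tau &
      forall sigma, ~ Fh sigma -> c sigma = set0].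

Definition lim_mul (c d : family) : family := fun sigma =>
  [set h | Fh sigma /\
     exists x y, [/\ c sigma x, d sigma y & sigma (x \o y, h)]].

(** open sets of the limit: subspace topology of the product of the discrete
    spaces M/sigma *)
Definition lim_open (W : set family) :=
  W `<=` proj_lim /\
  forall c, W c -> exists J : set (set ((S -> S) * (S -> S))),
    [/\ finite_set J, J `<=` Fh &
        forall c', proj_lim c' -> (forall sigma, J sigma -> c' sigma = c sigma) ->
                   W c'].

Definition canon (f : S -> S) : family := fun sigma =>
  [set g | Fh sigma /\ sigma (f, g)].

Definition canon_iso :=
  [/\ forall f, M f -> proj_lim (canon f),
      forall f g, M f -> M g -> canon f = canon g -> f = g,
      forall c, proj_lim c -> exists2 f, M f & canon f = c,
      forall f g, M f -> M g -> canon (f \o g) = lim_mul (canon f) (canon g) &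
      forall U, U `<=` M -> (M_open U <-> lim_open (canon @` U))].

End Defs.

Definition limit_conclusion {S : topologicalType} (M : set (S -> S))
    (F : set (set (S * S))) :=
  (forall rho, F rho ->
     [/\ r_continuous M rho, M_congruence M (rhat M rho)
       & M2_open M (rhat M rho)]) /\
  canon_iso M [set rhat M rho | rho in F].

(* A profinite semigroup is zero-dimensional, so a compact set C inside an open
   set O lies in a clopen set W inside O; by a tube-lemma argument over the
   compact space S, the syntactic congruence of W is open. Hence the members of
   F separate points, and every open O containing a compact C contains the
   rho-saturation of C for some rho in F. The first fact makes every family of
   endomorphisms that is compatible modulo the members of F converge pointwise
   to a continuous endomorphism, which gives surjectivity onto the projective
   limit; the second identifies the compact-open topology with uniform
   convergence modulo F, which makes the kernels of the r_rho open and the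
   canonical map a homeomorphism. For Aut S, the inverses of a compatible
   family of automorphisms are compatible again, and their limit inverts the
   limit of the family. *)

From HB Require Import structures.
From mathcomp Require Import all_boot all_order all_algebra.
From mathcomp Require Import all_classical all_reals all_analysis.
From mathcomp Require Import Rstruct finmap.

Set Implicit Arguments. Unset Strict Implicit. Unset Printing Implicit Defensive.
Local Open Scope classical_set_scope.

(** * Compact zero-dimensional spaces *)

Section CompactSpaces.
Context {T : topologicalType}.

Lemma compact_fset_cover (A : set T) (U : T -> set T) :
  compact A -> (forall p, A p -> nbhs p (U p)) ->
  exists D : {fset T}, A `<=` \bigcup_(p in [set` D]) U p.
Proof.
move=> /compact_near_coveringP cA AU.
pose G := filter_from [set: {fset T}] (fun D0 => [set D : {fset T} | (D0 `<=` D)%fset]).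
have FG : Filter G.
  apply: filter_from_filter; first by exists fset0.
  move=> D1 D2 _ _; exists (D1 `|` D2)%fset => // D /=.
  by rewrite fsubUset => /andP[].
have near_cover x : A x ->
    \forall x' \near x & D \near G, (\bigcup_(p in [set` D]) U p) x'.
  move=> Ax; exists (U x, [set D : {fset T} | x \in D]); first split.
  - exact: AU.
  - by exists [fset x]%fset => // D /= /fsubsetP; apply; rewrite inE.
  - by move=> [x' D] [/= Ux' xD]; exists x.
have [D0 _ sub] := cA _ G _ FG near_cover.
by exists D0; apply: (sub D0); rewrite /= fsubset_refl.
Qed.

Lemma open_fbigcap (I : choiceType) (D : {fset I}) (f : I -> set T) :
  (forall i, i \in D -> open (f i)) -> open (\bigcap_(i in [set` D]) f i).
Proof.
move=> fo; rewrite openE => x fx; apply: filter_bigI => i iD.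
by apply: open_nbhs_nbhs; split; [exact: fo|exact: fx].
Qed.

Definition quasi_component (x : T) := \bigcap_(U in [set U | clopen U /\ U x]) U.

Lemma quasi_component_sub_clopen (x : T) (O : set T) :
  compact [set: T] -> open O -> quasi_component x `<=` O ->
  exists W, [/\ clopen W, W x & W `<=` O].
Proof.
move=> cT oO QO.
have /compact_near_coveringP cO : compact (~` O).
  by apply: (subclosed_compact _ cT) => //; exact: open_closedC.
pose G := filter_from [set U | clopen U /\ U x]
  (fun U => [set W | [/\ clopen W, W x & W `<=` U]]).
have FG : Filter G.
  apply: filter_from_filter; first by exists setT; split => //; exact: clopenT.
  move=> U V [cU Ux] [cV Vx]; exists (U `&` V); first by split; [exact: clopenI|].
  by move=> W [cW Wx]; rewrite subsetI => -[].
have near_cover k : (~` O) k -> \forall k' \near k & W \near G, ~ W k'.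
  move=> nOk; have /existsNP[U /not_implyP[[cU Ux] nUk]] : ~ quasi_component x k.
    by move=> /QO.
  exists (~` U, [set W | [/\ clopen W, W x & W `<=` U]]); first split.
  - by apply: open_nbhs_nbhs; split => //; exact: closed_openC cU.2.
  - by exists U.
  - by move=> [k' W] [/= nUk' [_ _ WU]] /WU.
have [U [cU Ux] sub] := cO _ G _ FG near_cover.
exists U; split => // y Uy; apply: contrapT => nOy.
exact: sub U (And3 cU Ux (@subset_refl _ U)) y nOy Uy.
Qed.

Lemma clopenI_open_cover (W U V : set T) : clopen W -> open U -> open V ->
  W `<=` U `|` V -> U `&` V = set0 -> clopen (W `&` U).
Proof.
move=> [oW cW] oU oV WUV UV; split; first exact: openI.
have -> : W `&` U = W `&` ~` V.
  apply/seteqP; split=> z [Wz h]; split=> //.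
    by move=> Vz; have : (U `&` V) z by []; rewrite UV.
  by case: (WUV z Wz).
exact: closedI cW (open_closedC oV).
Qed.

Lemma open_iff_clopen (W : set T) a : clopen W -> open (fun b => W a <-> W b).
Proof.
move=> [oW cW]; have [Wa|nWa] := pselect (W a).
  rewrite (_ : (fun b => _) = W) //.
  by apply/seteqP; split=> b /= h; [exact: h.1|split].
rewrite (_ : (fun b => _) = ~` W); first exact: closed_openC.
by apply/seteqP; split=> b /= h; [move=> /h.2|split].
Qed.

Lemma connected_quasi_component (x : T) : hausdorff_space T -> compact [set: T] ->
  connected (quasi_component x).
Proof.
move=> hT cT B [b Bb] [C oC BQC] [D cD BQD].
set Q := quasi_component x in BQC BQD *.
have cQ : closed Q by apply: closed_bigI => U [[]].
have QxU U : clopen U -> U x -> Q `<=` U by move=> cU Ux y; apply; split.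
have cQC : closed (Q `&` ~` C) by apply: closedI => //; exact: open_closedC.
have BQC0 : B `&` (Q `&` ~` C) = set0.
  by apply/seteqP; split => // z [+ [_ nz]]; rewrite BQC => -[].
(* normal_openP lives in a section over an arbitrary realType; any one will do *)
have [U [V [oU oV BU QCV UV]]] := iffLR (@normal_openP Rdefinitions.R T)
  (compact_normal hT cT) _ _ (eq_ind_r closed (closedI cQ cD) BQD) cQC BQC0.
have QUV : Q `<=` U `|` V.
  move=> q Qq; have [Cq|nCq] := pselect (C q); last by right; apply: QCV.
  by left; apply: BU; rewrite BQC.
have [W [cW Wx WUV]] := quasi_component_sub_clopen cT (openU oU oV) QUV.
have [Ux|nUx] := pselect (U x).
  have QU : Q `<=` U by move=> q /(QxU _ (clopenI_open_cover cW oU oV WUV UV) (conj Wx Ux)) [].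
  apply/seteqP; split; first by rewrite BQC => z [].
  move=> q Qq; have [Cq|nCq] := pselect (C q); first by rewrite BQC.
  suff : (U `&` V) q by rewrite UV.
  by split; [exact: QU|exact: QCV].
have Qx : Q x by move=> U' [].
have Vx : V x by case: (QUV x Qx).
have QV : Q `<=` V.
  rewrite setUC in WUV; rewrite setIC in UV.
  by move=> q /(QxU _ (clopenI_open_cover cW oV oU WUV UV) (conj Wx Vx)) [].
suff : (U `&` V) b by rewrite UV.
by split; [exact: BU|apply: QV; move: Bb; rewrite BQC => -[]].
Qed.

Lemma compact_zero_dimensional : hausdorff_space T -> compact [set: T] ->
  totally_disconnected [set: T] -> zero_dimensional T.
Proof.
move=> hT cT tdT x y /eqP xy.
have Qx : quasi_component x `<=` [set x].
  rewrite -(tdT x I); apply: connected_component_max => //.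
    by move=> U [].
  exact: connected_quasi_component.
have oy : open (~` [set y]).
  by rewrite openC; exact/accessible_closed_set1/hausdorff_accessible.
have [W [cW Wx Wy]] := quasi_component_sub_clopen cT oy
  (subset_trans Qx (fun z (zx : z = x) zy => xy (etrans (esym zx) zy))).
by exists W; split => // /Wy; apply.
Qed.

Lemma clopen_between (C O : set T) : hausdorff_space T -> compact [set: T] ->
  zero_dimensional T -> compact C -> open O -> C `<=` O ->
  exists W, [/\ clopen W, C `<=` W & W `<=` O].
Proof.
move=> hT cT zT /compact_near_coveringP cC oO CO.
pose G := filter_from [set D | clopen D /\ D `<=` O]
  (fun D => [set W | [/\ clopen W, D `<=` W & W `<=` O]]).
have FG : Filter G.
  apply: filter_from_filter; first by exists set0; split => //; exact: clopen0.
  move=> D1 D2 [cD1 D1O] [cD2 D2O]; exists (D1 `|` D2).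
    by split; [exact: clopenU|rewrite subUset].
  by move=> W [cW]; rewrite subUset => -[D1W D2W] WO; do 2 split.
have near_cover c : C c -> \forall c' \near c & W \near G, W c'.
  move=> Cc; have /(_ c _ (open_nbhs_nbhs (conj oO (CO c Cc)))) [D [Dc cD] DO] :=
    zero_dimensional_cvg hT zT cT.
  exists (D, [set W | [/\ clopen W, D `<=` W & W `<=` O]]); first split.
  - by apply: open_nbhs_nbhs; split => //; exact: cD.1.
  - by exists D.
  - by move=> [c' W] [/= Dc' [_ DW _]]; exact: DW.
have [D [cD DO] sub] := cC _ G _ FG near_cover.
by exists D; split => //; apply: sub; split.
Qed.

End CompactSpaces.

(** * Open equivalences and syntactic congruences *)

Lemma open_section (X Y : topologicalType) (rho : set (X * Y)) s :
  open rho -> open [set t | rho (s, t)].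
Proof.
rewrite !openE => orho t rst; have [[A B] /= [nA nB] AB] := orho (s, t) rst.
by apply: filterS nB => t' Bt'; apply: (AB (s, t')); split => //; exact: nbhs_singleton.
Qed.

Definition is_equivalence (X : Type) (E : X -> X -> Prop) :=
  [/\ forall x, E x x, forall x y, E x y -> E y x &
      forall x y z, E x y -> E y z -> E x z].

Lemma open_equivalence (X : topologicalType) (E : X -> X -> Prop) :
  is_equivalence E -> (forall x, open (E x)) -> open [set p : X * X | E p.1 p.2].
Proof.
case=> Erefl Esym Etrans oE; rewrite openE => -[s t] /= Est.
exists (E s, E t) => /=.
  by split; apply: open_nbhs_nbhs; split; [exact: oE|exact: Erefl|exact: oE|exact: Erefl].
by move=> [s' t'] [/= Ess' Ett']; exact: Etrans _ _ _ (Etrans _ _ _ (Esym _ _ Ess') Est) Ett'.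
Qed.

Lemma compact_tube (P X Y : topologicalType) (phi : P * X -> Y) (E : Y -> Y -> Prop) :
  compact [set: P] -> continuous phi -> is_equivalence E -> (forall y, open (E y)) ->
  forall s, \forall t \near s, forall p, E (phi (p, s)) (phi (p, t)).
Proof.
move=> /compact_near_coveringP cP cphi [Erefl Esym Etrans] oE s.
have near_cover p : [set: P] p ->
    \forall p' \near p & t \near s, E (phi (p', s)) (phi (p', t)).
  move=> _; have [[A B] /= [pA sB] AB] : nbhs (p, s) (phi @^-1` E (phi (p, s))).
    by apply: cphi; apply: open_nbhs_nbhs; split; [exact: oE|exact: Erefl].
  exists (A, B); first by split.
  move=> [p' t] [/= Ap' Bt]; apply: Etrans (Esym _ _ (AB (p', s) _)) (AB (p', t) _) => //.
  exact: conj Ap' (nbhs_singleton sB).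
apply: filterS (cP _ (nbhs s) (fun t p => E (phi (p, s)) (phi (p, t))) _ near_cover).
by move=> t + p; apply.
Qed.

Definition act_refine (P X : Type) (phi : P * X -> X) (E : X -> X -> Prop) s t :=
  E s t /\ forall p, E (phi (p, s)) (phi (p, t)).

Lemma act_refine_equivalence (P X : Type) (phi : P * X -> X) (E : X -> X -> Prop) :
  is_equivalence E -> is_equivalence (act_refine phi E).
Proof.
case=> Erefl Esym Etrans; split.
- by move=> x; split.
- by move=> x y [Exy hxy]; split=> [|p]; apply: Esym.
- move=> x y z [Exy hxy] [Eyz hyz].
  by split=> [|p]; [exact: Etrans _ _ _ Exy Eyz|exact: Etrans _ _ _ (hxy p) (hyz p)].
Qed.

Lemma open_act_refine (P X : topologicalType) (phi : P * X -> X) (E : X -> X -> Prop) :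
  compact [set: P] -> continuous phi -> is_equivalence E -> (forall x, open (E x)) ->
  forall s, open (act_refine phi E s).
Proof.
move=> cP cphi [Erefl Esym Etrans] oE s; rewrite openE => t [Est hst].
have near_t : \forall t' \near t, E t t' by apply: open_nbhs_nbhs; split.
have := compact_tube cP cphi (And3 Erefl Esym Etrans) oE t.
apply: filter_app; apply: filterS near_t => t' Ett' ht'.
by split=> [|p]; [exact: Etrans _ _ _ Est Ett'|exact: Etrans _ _ _ (hst p) (ht' p)].
Qed.

Section SyntacticCongruence.
Variables (S : topologicalType) (mul : S -> S -> S).
Hypothesis mulA : associative mul.

(* [s ~ t] iff [u s v \in W <-> u t v \in W] for all [u], [v] in S with an
   identity adjoined: the inner refinement supplies [v], the outer one [u]. *)
Definition syntactic (W : set S) : set (S * S) :=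
  [set p | act_refine (fun q => mul q.1 q.2)
             (act_refine (fun q => mul q.2 q.1) (fun a b => W a <-> W b)) p.1 p.2].

Variable W : set S.

Lemma syntactic_mem s t : syntactic W (s, t) -> W s -> W t.
Proof. by move=> [[[]]]. Qed.

Lemma syntactic_mulr s t u : syntactic W (s, t) -> syntactic W (mul s u, mul t u).
Proof.
move=> [[_ hy] hx]; split; first split.
- exact: hy.
- by move=> y /=; rewrite -!mulA; exact: hy.
- move=> x /=; split; first by rewrite !mulA; exact: (hx x).2.
  by move=> y; rewrite !mulA -!(mulA (mul x _)); exact: (hx x).2.
Qed.

Lemma syntactic_mull s t u : syntactic W (s, t) -> syntactic W (mul u s, mul u t).
Proof.
by move=> [_ hx]; split=> [|x]; [exact: hx|rewrite /= !mulA; exact: hx].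
Qed.

Lemma syntactic_equivalence : is_equivalence (fun s t => syntactic W (s, t)).
Proof.
rewrite /syntactic /=; do 2 apply: act_refine_equivalence.
by split=> // [x y|x y z]; [exact: iff_sym|exact: iff_trans].
Qed.

Lemma syntactic_congruence : congruence mul (syntactic W).
Proof.
have [srefl ssym strans] := syntactic_equivalence; split=> // x y z w xy zw.
exact: strans (syntactic_mulr _ xy) (syntactic_mull _ zw).
Qed.

Lemma open_syntactic : continuous (fun p : S * S => mul p.1 p.2) ->
  compact [set: S] -> clopen W -> open (syntactic W).
Proof.
move=> mul_cont cS clW.
have rmul_cont : continuous (fun q : S * S => mul q.2 q.1).
  by move=> q; exact: (continuous_comp (@swap_continuous S S q) (mul_cont _)).
have E0 : is_equivalence (fun a b => W a <-> W b).
  by split=> // [x y|x y z]; [exact: iff_sym|exact: iff_trans].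
apply: open_equivalence syntactic_equivalence _ => s.
apply: open_act_refine => //; first exact: act_refine_equivalence.
by apply: open_act_refine => // a; exact: open_iff_clopen.
Qed.

End SyntacticCongruence.

Section Endomorphisms.
Variables (S : topologicalType) (mul : S -> S -> S).

Lemma EndS_comp f g : EndS mul f -> EndS mul g -> EndS mul (f \o g).
Proof.
move=> [cf hf] [cg hg]; split; last by move=> x y /=; rewrite hg hf.
by move=> x; apply: continuous_comp; [exact: cg|exact: cf].
Qed.

Lemma AutS_comp f g : AutS mul f -> AutS mul g -> AutS mul (f \o g).
Proof.
move=> [cf hf [f' [cf' ff' f'f]]] [cg hg [g' [cg' gg' g'g]]].
have [cfg hfg] := EndS_comp (conj cf hf) (conj cg hg).
split => //; exists (g' \o f'); split.
- by move=> x; apply: continuous_comp; [exact: cf'|exact: cg'].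
- by move=> x /=; rewrite ff' gg'.
- by move=> x /=; rewrite g'g f'f.
Qed.

Lemma AutS_inverse f : AutS mul f ->
  exists2 g, AutS mul g & cancel f g /\ cancel g f.
Proof.
case=> cf hf [g [cg fg gf]]; exists g; split=> //; last by exists f.
by move=> x y; rewrite -{1}(gf x) -{1}(gf y) -hf fg.
Qed.

End Endomorphisms.

(** * Fundamental systems of open congruences *)

Section ProfiniteSemigroup.
Variables (S : topologicalType) (mul : S -> S -> S).
Hypotheses (mulA : associative mul)
  (mul_cont : continuous (fun p : S * S => mul p.1 p.2))
  (cS : compact [set: S]) (hS : hausdorff_space S)
  (tdS : totally_disconnected [set: S]).

Lemma open_congruence_saturation (C O : set S) : compact C -> open O -> C `<=` O ->
  exists rho, [/\ open rho, congruence mul rho & forall s t, C s -> rho (s, t) -> O t].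
Proof.
move=> cC oO CO.
have [W [cW CW WO]] := clopen_between hS cS (compact_zero_dimensional hS cS tdS) cC oO CO.
exists (syntactic mul W); split.
- exact: open_syntactic.
- exact: syntactic_congruence.
- by move=> s t /CW Ws /syntactic_mem/(_ Ws)/WO.
Qed.

Lemma open_congruence_separates s t : s <> t ->
  exists rho, [/\ open rho, congruence mul rho & ~ rho (s, t)].
Proof.
move=> st; have oO : open (~` [set t]).
  by rewrite openC; exact/accessible_closed_set1/hausdorff_accessible.
have [|rho [orho crho hrho]] := open_congruence_saturation (@compact_set1 S s) oO.
  by move=> z -> zt; exact: st.
by exists rho; split => // /(hrho s t erefl); apply.
Qed.

Variable F : set (set (S * S)).
Hypotheses (F_open_congruence : forall rho, F rho -> open rho /\ congruence mul rho)
  (F_cofinal : forall sigma, open sigma -> congruence mul sigma ->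
     exists2 rho, F rho & rho `<=` sigma).

Lemma F_open rho : F rho -> open rho. Proof. by case/F_open_congruence. Qed.
Lemma F_refl rho x : F rho -> rho (x, x).
Proof. by case/F_open_congruence => _ [+ _ _ _]; apply. Qed.
Lemma F_sym rho x y : F rho -> rho (x, y) -> rho (y, x).
Proof. by case/F_open_congruence => _ [_ + _ _]; apply. Qed.
Lemma F_trans rho x y z : F rho -> rho (x, y) -> rho (y, z) -> rho (x, z).
Proof. by case/F_open_congruence => _ [_ _ + _]; apply. Qed.
Lemma F_mul rho x y z w : F rho -> rho (x, y) -> rho (z, w) -> rho (mul x z, mul y w).
Proof. by case/F_open_congruence => _ [_ _ _]; apply. Qed.

Lemma F_nonempty : exists rho, F rho.
Proof.
have congrT : congruence mul setT by [].
by have [rho Frho _] := F_cofinal openT congrT; exists rho.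
Qed.

Lemma F_directed rho1 rho2 : F rho1 -> F rho2 ->
  exists2 rho, F rho & rho `<=` rho1 `&` rho2.
Proof.
move=> F1 F2; apply: F_cofinal; first exact: openI (F_open F1) (F_open F2).
split.
- by move=> x; split; exact: F_refl.
- by move=> x y [h1 h2]; split; exact: F_sym.
- by move=> x y z [h1 h2] [k1 k2]; split; [exact: F_trans F1 h1 k1|exact: F_trans F2 h2 k2].
- by move=> x y z w [h1 h2] [k1 k2]; split; exact: F_mul.
Qed.

Lemma F_finite_lower_bound (I : choiceType) (J : set I) (P : I -> set (S * S) -> Prop) :
  finite_set J -> (forall i rho rho', P i rho -> rho' `<=` rho -> P i rho') ->
  (forall i, J i -> exists2 rho, F rho & P i rho) ->
  exists2 rho, F rho & forall i, J i -> P i rho.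
Proof.
move=> /finite_fsetP[B ->] Pdown JP.
pose G := filter_from F (fun rho => [set rho' | F rho' /\ rho' `<=` rho]).
have FG : Filter G.
  apply: filter_from_filter; first exact: F_nonempty.
  move=> r1 r2 F1 F2; have [r3 F3 r3r] := F_directed F1 F2.
  by exists r3 => // r [Fr rr3]; split; split=> //; move=> p /rr3 /r3r [].
have [rho Frho sub] : G (\bigcap_(i in [set` B]) P i).
  apply: filter_bigI => i iB; have [rho Frho Pi] := JP i iB.
  by exists rho => // r [_ rrho]; exact: Pdown Pi rrho.
by exists rho => // i iB; exact: sub rho (conj Frho (@subset_refl _ rho)) i iB.
Qed.

Lemma F_saturation (C O : set S) : compact C -> open O -> C `<=` O ->
  exists2 rho, F rho & forall s t, C s -> rho (s, t) -> O t.
Proof.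
move=> cC oO CO; have [sigma [os cs hs]] := open_congruence_saturation cC oO CO.
have [rho Frho rs] := F_cofinal os cs.
by exists rho => // s t Cs /rs; exact: hs.
Qed.

Lemma F_separates x y : (forall rho, F rho -> rho (x, y)) -> x = y.
Proof.
move=> h; apply: contrapT => /open_congruence_separates[sigma [os cs nxy]].
by have [rho Frho /(_ _ (h _ Frho))] := F_cofinal os cs.
Qed.

Lemma closed_F_class rho a : F rho -> closed [set t | rho (a, t)].
Proof.
move=> Frho; rewrite -openC openE => t nat'; rewrite /interior.
apply: (@filterS _ _ _ [set t' | rho (t, t')]).
  by move=> t' tt' at'; apply: nat'; exact: F_trans Frho at' (F_sym Frho tt').
by apply: open_nbhs_nbhs; split; [exact: open_section (F_open Frho)|exact: F_refl].
Qed.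

Definition compatible (g : set (S * S) -> S -> S) :=
  forall rho rho', F rho -> F rho' -> rho' `<=` rho ->
    forall s, rho (g rho s, g rho' s).

Lemma compatible_limit (g : set (S * S) -> S -> S) : compatible g ->
  exists f : S -> S, forall rho, F rho -> forall s, rho (g rho s, f s).
Proof.
move=> cg; suff : forall s, exists y, forall rho, F rho -> rho (g rho s, y).
  by case/choice => f hf; exists f => rho Frho s; exact: hf.
move=> s; pose G := filter_from F (fun rho => [set t | rho (g rho s, t)]).
have FG : ProperFilter G.
  apply: filter_from_proper; last by move=> rho Frho; exists (g rho s); exact: F_refl.
  apply: filter_from_filter; first exact: F_nonempty.
  move=> r1 r2 F1 F2; have [r3 F3 r3r] := F_directed F1 F2.
  exists r3 => // t h; have [h1 h2] := r3r _ h; split.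
    exact: F_trans F1 (cg _ _ F1 F3 (fun p q => (r3r p q).1) s) h1.
  exact: F_trans F2 (cg _ _ F2 F3 (fun p q => (r3r p q).2) s) h2.
have [y [_ cly]] := cS FG (@filterT _ G _).
exists y => rho Frho.
have [z [/= rgz ryz]] := cly _ _ (ex_intro2 _ _ rho Frho (fun t (h : rho (g rho s, t)) => h))
  (open_nbhs_nbhs (conj (open_section y (F_open Frho)) (F_refl y Frho))).
exact: F_trans Frho rgz (F_sym Frho ryz).
Qed.

Section Limit.
Variables (g : set (S * S) -> S -> S) (f : S -> S).
Hypothesis g_to_f : forall rho, F rho -> forall s, rho (g rho s, f s).

Lemma limit_continuous : (forall rho, F rho -> continuous (g rho)) -> continuous f.
Proof.
move=> gc; apply/continuousP => A oA; rewrite openE => s /= As.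
have [|rho Frho hrho] := F_saturation (@compact_set1 S (f s)) oA; first by move=> z ->.
have : nbhs s (g rho @^-1` [set t | rho (g rho s, t)]).
  apply: open_nbhs_nbhs; split; last exact: F_refl.
  by apply: (iffLR (continuousP _)) (gc _ Frho) _ _; exact: open_section (F_open Frho).
apply: filterS => s' /= rgs'; apply: (hrho (f s)) => //.
exact: F_trans Frho (F_sym Frho (g_to_f Frho s)) (F_trans Frho rgs' (g_to_f Frho s')).
Qed.

Lemma limit_hom : (forall rho, F rho -> is_hom mul (g rho)) -> is_hom mul f.
Proof.
move=> gh x y; apply: F_separates => rho Frho.
have := F_mul Frho (g_to_f Frho x) (g_to_f Frho y); rewrite -gh //.
exact: F_trans Frho (F_sym Frho (g_to_f Frho (mul x y))).
Qed.

Lemma limit_EndS : (forall rho, F rho -> EndS mul (g rho)) -> EndS mul f.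
Proof.
move=> gE; split; first by apply: limit_continuous => rho /gE[].
by apply: limit_hom => rho /gE[].
Qed.

End Limit.

Section AutLimit.
Hypothesis F_characteristic :
  forall rho f x y, F rho -> AutS mul f -> rho (x, y) -> rho (f x, f y).

Lemma AutS_limit (g : set (S * S) -> S -> S) f :
  (forall rho, F rho -> AutS mul (g rho)) -> compatible g -> EndS mul f ->
  (forall rho, F rho -> forall s, rho (g rho s, f s)) -> AutS mul f.
Proof.
(* The inverses of the g rho form a compatible family, whose limit inverts f. *)
move=> gA cg [cf hf] g_to_f.
have /choice[k kA] rho : exists k, F rho ->
    AutS mul k /\ cancel (g rho) k /\ cancel k (g rho).
  have [Frho|nF] := pselect (F rho); last by exists id.
  by have [k ? ?] := AutS_inverse (gA rho Frho); exists k.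
have ck : compatible k.
  move=> r r' Fr Fr' rr' s; have [kAr [gk kg]] := kA r Fr.
  have [_ [_ kg']] := kA r' Fr'.
  have := cg _ _ Fr Fr' rr' (k r' s); rewrite kg' => /(F_characteristic Fr kAr).
  by rewrite gk => /(F_sym Fr).
have [h k_to_h] := compatible_limit ck.
have kc rho : F rho -> continuous (k rho) by move=> /kA [[]].
split=> //; exists h; split; first exact: limit_continuous k_to_h kc.
- move=> s; apply: F_separates => rho Frho; have [kA' [gk _]] := kA rho Frho.
  have : rho (k rho (f s), k rho (g rho s)).
    exact: F_characteristic Frho kA' (F_sym Frho (g_to_f _ Frho s)).
  rewrite gk; exact: F_trans Frho (F_sym Frho (k_to_h _ Frho (f s))).
- move=> s; apply: F_separates => rho Frho; have [_ [_ kg]] := kA rho Frho.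
  have : rho (g rho (h s), g rho (k rho s)).
    exact: F_characteristic Frho (gA rho Frho) (F_sym Frho (k_to_h _ Frho s)).
  rewrite kg; exact: F_trans Frho (F_sym Frho (g_to_f _ Frho (h s))).
Qed.

End AutLimit.

Lemma F_uniform_nbhs f (V : set {compact-open, S -> S}) :
  continuous f -> open V -> V f ->
  exists2 rho, F rho & forall g, (forall s, rho (f s, g s)) -> V g.
Proof.
move=> cf oV Vf.
pose G := filter_from F
  (fun rho => [set g : {compact-open, S -> S} | forall s, rho (f s, g s)]).
have FG : Filter G.
  apply: filter_from_filter; first exact: F_nonempty.
  move=> r1 r2 F1 F2; have [r3 F3 r3r] := F_directed F1 F2.
  by exists r3 => // g r3g; split => s; have [] := r3r _ (r3g s).
have /(_ V) : G --> (f : {compact-open, S -> S}).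
  apply/compact_open_cvgP => K O cK oO fKO.
  have cfK : compact (f @` K).
    by apply: continuous_compact => //; exact: continuous_subspaceT.
  have [rho Frho hrho] := F_saturation cfK oO fKO.
  by exists rho => // g fg _ [t Kt <-]; exact: hrho (f t) _ (ex_intro2 _ _ t Kt erefl) (fg t).
by case=> [|rho Frho sub]; [exact: open_nbhs_nbhs|exists rho].
Qed.

(** * The projective limit of the quotients of End S or Aut S *)

Section Monoid.
Variable M : set (S -> S).
Hypotheses (M_End : forall f, M f -> EndS mul f)
  (M_comp : forall f g, M f -> M g -> M (f \o g))
  (F_invariant : forall rho f x y, F rho -> M f -> rho (x, y) -> rho (f x, f y))
  (M_limit : forall (g : set (S * S) -> S -> S) f,
     (forall rho, F rho -> M (g rho)) -> compatible g -> EndS mul f ->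
     (forall rho, F rho -> forall s, rho (g rho s, f s)) -> M f).

Local Notation Fh := [set rhat M rho | rho in F].

Lemma rhat_refl rho f : F rho -> M f -> rhat M rho (f, f).
Proof. by move=> Frho Mf; split => // s; exact: F_refl. Qed.

Lemma rhat_sym rho f g : F rho -> rhat M rho (f, g) -> rhat M rho (g, f).
Proof. by move=> Frho [Mf Mg fg]; split => // s; exact: F_sym Frho (fg s). Qed.

Lemma rhat_trans rho f g h : F rho ->
  rhat M rho (f, g) -> rhat M rho (g, h) -> rhat M rho (f, h).
Proof.
by move=> Frho [Mf Mg fg] [_ Mh gh]; split => // s; exact: F_trans Frho (fg s) (gh s).
Qed.

Lemma rhat_comp rho f g h k : F rho ->
  rhat M rho (f, g) -> rhat M rho (h, k) -> rhat M rho (f \o h, g \o k).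
Proof.
move=> Frho [Mf Mg fg] [Mh Mk hk]; split => /=; try exact: M_comp.
by move=> s; exact: F_trans Frho (F_invariant Frho Mf (hk s)) (fg (k s)).
Qed.

Lemma rhat_mono rho rho' : rho `<=` rho' -> rhat M rho `<=` rhat M rho'.
Proof. by move=> sub [f g] [Mf Mg fg]; split => // s; exact: sub. Qed.

Lemma rhat_class rho f g : F rho -> rhat M rho (f, g) ->
  [set h | rhat M rho (f, h)] = [set h | rhat M rho (g, h)].
Proof.
move=> Frho fg; apply/seteqP; split => h.
  exact: rhat_trans Frho (rhat_sym Frho fg).
exact: rhat_trans Frho fg.
Qed.

Lemma rhat_M_congruence rho : F rho -> M_congruence M (rhat M rho).
Proof.
move=> Frho; split.
- by move=> f g [].
- by move=> f; exact: rhat_refl.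
- by move=> f g; exact: rhat_sym.
- by move=> f g h; exact: rhat_trans.
- by move=> f g h k; exact: rhat_comp.
Qed.

Lemma F_r_continuous rho : F rho -> r_continuous M rho.
Proof.
(* Finitely many rho-classes [a] cover S, and g is rho-equivalent to f iff g
   maps each of them into the rho-saturation of f [a]. *)
move=> Frho f Mf.
have [D cover] := compact_fset_cover (U := fun a => [set t | rho (a, t)]) cS
  (fun a _ => open_nbhs_nbhs (conj (open_section a (F_open Frho)) (F_refl a Frho))).
pose V a := \bigcup_(t in [set t | rho (a, t)]) [set w | rho (f t, w)].
exists (\bigcap_(a in [set` D]) [set g : {compact-open, S -> S} |
  g @` [set t | rho (a, t)] `<=` V a]).
split.
  apply: open_fbigcap => a _; apply: compact_open_open.
    by apply: (subclosed_compact _ cS) => //; exact: closed_F_class.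
  by apply: bigcup_open => t _; exact: open_section (F_open Frho).
apply/seteqP; split => g.
  by move=> [_ Mg fg]; split => // a _ _ [t a_t <-]; exists t.
move=> [Vg Mg]; split => //= x; have [a aD ax] := cover x I.
have [t a_t tgx] := Vg a aD (g x) (ex_intro2 _ _ x ax erefl).
exact: F_trans Frho (F_invariant Frho Mf (F_trans Frho (F_sym Frho ax) a_t)) tgx.
Qed.

Lemma rhat_M2_open rho : F rho -> M2_open M (rhat M rho).
Proof.
move=> Frho f g fg; have [Mf Mg _] := fg.
exists [set f' | rhat M rho (f, f')], [set g' | rhat M rho (g, g')]; split.
- exact: F_r_continuous.
- exact: F_r_continuous.
- exact: rhat_refl.
- exact: rhat_refl.
- by move=> f' g' ff' gg'; exact: rhat_trans Frho (rhat_sym Frho ff') (rhat_trans Frho fg gg').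
Qed.

Lemma canon_rhat rho f : F rho -> canon Fh f (rhat M rho) = [set g | rhat M rho (f, g)].
Proof.
move=> Frho; apply/seteqP; split=> g; first by case.
by split; first exists rho.
Qed.

Lemma canon_proj_lim f : M f -> proj_lim M Fh (canon Fh f).
Proof.
move=> Mf; split.
- by move=> _ [rho Frho <-]; exists f => //; rewrite canon_rhat.
- by move=> sigma tau _ Ftau st g [_ /st fg].
- by move=> sigma nF; apply/seteqP; split=> g // [].
Qed.

Lemma canon_inj f g : M f -> M g -> canon Fh f = canon Fh g -> f = g.
Proof.
move=> Mf Mg e; apply: funext => x; apply: F_separates => rho Frho.
have : canon Fh g (rhat M rho) f by rewrite -e canon_rhat //; exact: rhat_refl.
by rewrite canon_rhat // => -[_ _ /(_ x)]; exact: F_sym.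
Qed.

Lemma canon_surj c : proj_lim M Fh c -> exists2 f, M f & canon Fh f = c.
Proof.
case=> c_class c_mono c_out.
have /choice[g hg] rho : exists g, F rho ->
    M g /\ c (rhat M rho) = [set h | rhat M rho (g, h)].
  have [Frho|nF] := pselect (F rho); last by exists id.
  by have [g Mg e] := c_class _ (ex_intro2 _ _ rho Frho erefl); exists g.
have cg : compatible g.
  move=> r r' Fr Fr' r'r s; have [Mg' e'] := hg r' Fr'.
  have : c (rhat M r') (g r') by rewrite e'; exact: rhat_refl.
  move/(c_mono _ _ (ex_intro2 _ _ r' Fr' erefl) (ex_intro2 _ _ r Fr erefl) (rhat_mono r'r)).
  by case: (hg r Fr) => _ -> [_ _]; apply.
have [f g_to_f] := compatible_limit cg.
have Ef : EndS mul f.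
  by apply: (limit_EndS g_to_f) => rho Frho; exact: M_End (hg rho Frho).1.
have Mf : M f by apply: (M_limit _ cg Ef g_to_f) => // rho Frho; exact: (hg rho Frho).1.
exists f => //; apply: funext => sigma.
have [[rho Frho <-]|nF] := pselect (Fh sigma); last first.
  by rewrite c_out //; apply/seteqP; split=> h // [].
have [Mg ->] := hg rho Frho; rewrite canon_rhat //.
by apply: rhat_class => //; apply: rhat_sym => //; split => // s; exact: g_to_f.
Qed.

Lemma canon_comp f g : M f -> M g ->
  canon Fh (f \o g) = lim_mul Fh (canon Fh f) (canon Fh g).
Proof.
move=> Mf Mg; apply: funext => sigma; apply/seteqP; split => h.
  case=> -[rho Frho <-] fgh; split; first by exists rho.
  by exists f, g; rewrite !canon_rhat //; split => //; exact: rhat_refl.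
case=> -[rho Frho <-] [x [y []]]; rewrite !canon_rhat // => fx gy xyh.
exact: rhat_trans Frho (rhat_comp Frho fx gy) xyh.
Qed.

Lemma canon_open U : U `<=` M -> M_open M U -> lim_open M Fh (canon Fh @` U).
Proof.
move=> UM [V [oV UVM]]; split; first by move=> _ [f Uf <-]; exact: canon_proj_lim (UM _ Uf).
move=> _ [f Uf <-]; have := Uf; rewrite UVM => -[Vf Mf].
have [rho Frho fV] := F_uniform_nbhs (M_End Mf).1 oV Vf.
exists [set rhat M rho]; split.
- exact: finite_set1.
- by move=> _ ->; exists rho.
move=> _ /canon_surj[g Mg <-] /(_ (rhat M rho) erefl) e.
have : canon Fh g (rhat M rho) g by rewrite canon_rhat //; exact: rhat_refl.
rewrite e canon_rhat // => -[_ _ fg].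
by exists g => //; split => //; exact: fV.
Qed.

Lemma open_canon U : U `<=` M -> lim_open M Fh (canon Fh @` U) -> M_open M U.
Proof.
move=> UM [_ W_open].
exists (\bigcup_(V in [set V : set {compact-open, S -> S} | open V /\ V `&` M `<=` U]) V).
split; first by apply: bigcup_open => V [].
apply/seteqP; split; last by move=> f [[V [_ VMU] Vf] Mf]; exact: VMU.
move=> f Uf; have Mf := UM _ Uf; split => //.
have [J [fJ JF agree]] := W_open _ (ex_intro2 _ _ f Uf erefl).
have [rho Frho rhoJ] : exists2 rho, F rho & forall sigma, J sigma -> rhat M rho `<=` sigma.
  apply: F_finite_lower_bound fJ _ _.
  - by move=> sigma r r' sub r'r; exact: subset_trans (rhat_mono r'r) sub.
  - by move=> sigma /JF[r Fr <-]; exists r.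
have near_f g : rhat M rho (f, g) -> U g.
  move=> fg; have Mg : M g by case: fg.
  suff [f' Uf' e] : (canon Fh @` U) (canon Fh g) by rewrite -(canon_inj (UM _ Uf') Mg e).
  apply: agree; first exact: canon_proj_lim.
  move=> _ /[dup] /JF[r Fr <-] /rhoJ sub; rewrite !canon_rhat //.
  exact/esym/rhat_class/sub.
have [V [oV eV]] := F_r_continuous Frho Mf.
exists V; first by split => // g; rewrite -eV; exact: near_f.
have : [set g | rhat M rho (f, g)] f by exact: rhat_refl.
by rewrite eV => -[].
Qed.

Lemma monoid_limit_conclusion : limit_conclusion M F.
Proof.
split=> [rho Frho|].
  by split; [exact: F_r_continuous|exact: rhat_M_congruence|exact: rhat_M2_open].
split.
- exact: canon_proj_lim.
- exact: canon_inj.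
- exact: canon_surj.
- exact: canon_comp.
- by move=> U UM; split; [exact: canon_open|exact: open_canon].
Qed.

End Monoid.

End ProfiniteSemigroup.

Theorem theorem9 (S : topologicalType) (mul : S -> S -> S) :
  profinite_semigroup mul ->
  (forall F : set (set (S * S)),
     fundamental_system mul (fully_invariant mul) F ->
     limit_conclusion (EndS mul) F) /\
  (forall F : set (set (S * S)),
     fundamental_system mul (characteristic mul) F ->
     limit_conclusion (AutS mul) F).
Proof.
case=> mulA mul_cont cS hS tdS; split => F [hF hcof];
  have F_oc rho : F rho -> open rho /\ congruence mul rho by case/hF.
- apply: (monoid_limit_conclusion mulA mul_cont cS hS tdS F_oc hcof) => //.
  + exact: EndS_comp.
  + by move=> rho f x y /hF[_ _ inv] Mf; exact: inv.
- apply: (monoid_limit_conclusion mulA mul_cont cS hS tdS F_oc hcof).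
  + by move=> f [].
  + exact: AutS_comp.
  + by move=> rho f x y /hF[_ _ inv] Af; exact: inv.
  + apply: AutS_limit => // rho f x y /hF[_ _ inv] Af; exact: inv.
Qed.
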